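(* Let $(\mathcal{X},\rho,\nu)$ be a metric measure space, where $\rho$ is a separable metric and $\nu$ is a finite Borel measure. Let $\mathbb{X}=(X_n)_{n\ge 0}$ be a stochastic process in $\mathcal{X}$ that is ergodically dominated by $\nu$, and let $\eta:\mathcal{X}\to\mathcal{Y}$ be a measurable label function with $\nu$-negligible boundary, i.e. $\nu(\partial_\eta\mathcal{X})=0$. Then the nearest neighbor rule is online consistent with respect to $(\mathbb{X},\eta)$: for any nearest neighbor process $(\tilde X_n)_{n\ge1}$ of $\mathbb{X}$, \[\limsup_{N\to\infty}\frac1N\sum_{n=1}^N \mathbb{1}\{\eta(X_n)\neq\eta(\tilde X_n)\}=0\quad\text{almost surely.}\]
   Context: For a process $\mathbb{X}=(X_n)_{n\ge0}$, write $\mathbb{X}_{<n}=\{X_0,\dots,X_{n-1}\}$. A nearest neighbor process of $\mathbb{X}$ is any process $(\tilde X_n)_{n\ge1}$ with $\tilde X_n\in\arg\min_{x\in\mathbb{X}_{<n}}\rho(X_n,x)$. For a measurable $\eta:\mathcal{X}\to\mathcal{Y}$, $\mathrm{margin}_\eta(x)=\inf\{\rho(x,x'): \eta(x')\neq\eta(x)\}$ (infimum of the empty set is $+\infty$), and the boundary is $\partial_\eta\mathcal{X}=\{x:\mathrm{margin}_\eta(x)=0\}$. The process $\mathbb{X}$ is ergodically dominated by $\nu$ if for every $\epsilon>0$ there is $\delta>0$ such that every measurable $A\subset\mathcal{X}$ with $\nu(A)<\delta$ satisfies $\limsup_{N\to\infty}\frac1N\sum_{n=1}^N\mathbb{1}\{X_n\in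 A\}<\epsilon$ almost surely. *)

From HB Require Import structures.
From mathcomp Require Import all_boot all_order all_algebra.
From mathcomp Require Import all_classical all_reals all_analysis.
Set Implicit Arguments. Unset Strict Implicit. Unset Printing Implicit Defensive.
Import Order.TTheory GRing.Theory Num.Theory.
Local Open Scope classical_set_scope.
Local Open Scope ring_scope.

Section Defs.
Context {R : realType} {T : Type}.

Definition is_metric (rho : T -> T -> R) : Prop :=
  (forall x y, 0 <= rho x y) /\
  (forall x y, rho x y = 0 <-> x = y) /\
  (forall x y, rho x y = rho y x) /\
  (forall x y z, rho x z <= rho x y + rho y z).

Definition separable_metric (rho : T -> T -> R) : Prop :=
  exists D : set T, countable D /\
    forall x (e : R), 0 < e -> exists2 y, D y & rho x y < e.

Definition rho_open (rho : T -> T -> R) : set (set T) :=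
  [set A | forall x, A x -> exists2 r : R, 0 < r & [set y | rho x y < r] `<=` A].

(* margin_eta(x) = inf { rho(x,x') : eta x' <> eta x }, with inf set0 = +oo *)
Definition margin {Y : Type} (rho : T -> T -> R) (eta : T -> Y) (x : T) : \bar R :=
  ereal_inf [set (rho x x')%:E | x' in [set x' | eta x' <> eta x]].

Definition boundary {Y : Type} (rho : T -> T -> R) (eta : T -> Y) : set T :=
  [set x | margin rho eta x = 0%E].

Definition nn_process {Omega : Type} (rho : T -> T -> R)
    (X Xt : nat -> Omega -> T) : Prop :=
  forall n w, (0 < n)%N ->
    (exists2 k, (k < n)%N & Xt n w = X k w) /\
    (forall k, (k < n)%N -> rho (X n w) (Xt n w) <= rho (X n w) (X k w)).

Definition freq {Omega : Type} (X : nat -> Omega -> T) (A : set T)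
    (w : Omega) (N : nat) : R :=
  (\sum_(1 <= n < N.+1) (\1_A (X n w) : R)) / N%:R.
End Defs.

Definition ergodically_dominated {R : realType} {d0 d : measure_display}
    {Omega : measurableType d0} {T : measurableType d}
    (P : probability Omega R) (nu : set T -> \bar R) (X : nat -> Omega -> T) : Prop :=
  forall eps : R, 0 < eps -> exists2 delta : R, 0 < delta &
    forall A : set T, measurable A -> (nu A < delta%:E)%E ->
      {ae P, forall w, (limn_esup (fun N => (freq X A w N)%:E) < eps%:E)%E}.

From HB Require Import structures.
From mathcomp Require Import all_boot all_order all_algebra.
From mathcomp Require Import all_classical all_reals all_analysis.
From mathcomp Require Import zify lra.
Import Order.TTheory GRing.Theory Num.Theory.
Local Open Scope classical_set_scope.
Local Open Scope ring_scope.

(* Enumerate a dense sequence (e_i).  Call the ball of radius r around e_i safe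
   when eta is constant on the ball of radius 3r around e_i.  If X_n lies in a
   safe ball B(e_i, r) that some earlier X_k already visited, its nearest
   neighbour is within 2r of X_n, hence inside the safe ball, and the label is
   predicted correctly.  So among the first N steps, at most K^2 mistakes occur
   inside the union W_K of the (at most K^2) safe balls with i, m < K and radius
   1/(m+1), and the others occur outside W_K.  A point outside every W_K lies on
   the boundary, so nu(~ W_K) tends to 0; ergodic domination then bounds the
   frequency of visits outside W_K by any eps, and the mistake rate by
   eps + K^2/N. *)

Section limf_esup_near.
Context {R : realType} {U : choiceType} {T : filteredType U} (F : set_system T)
  {FF : Filter F}.
Local Open Scope ereal_scope.

Lemma limf_esup_lt_near (f : T -> \bar R) (l : \bar R) :
  limf_esup f F < l -> \forall x \near F, f x < l.
Proof.
rewrite limf_esupE => /ereal_inf_lt[_ [V FV <-]] Vl.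
apply: filterS FV => x Vx; apply: le_lt_trans Vl.
by apply: ereal_sup_ubound; exists x.
Qed.

Lemma limf_esup_le_near (f : T -> \bar R) (l : \bar R) :
  (\forall x \near F, f x <= l) -> limf_esup f F <= l.
Proof.
move=> Fl; rewrite limf_esupE.
apply: (@le_trans _ _ (ereal_sup (f @` [set x | f x <= l]))).
  by apply: ereal_inf_lbound; exists [set x | f x <= l].
by apply: ge_ereal_sup => _ [x + <-].
Qed.

End limf_esup_near.

Lemma limn_esup_le_vanishing {R : realType} {u v : R^nat} {c l : R} :
  (forall n, u n <= c / n%:R + v n) ->
  (limn_esup (fun n => (v n)%:E) < l%:E)%E ->
  (limn_esup (fun n => (u n)%:E) <= l%:E)%E.
Proof.
move=> uv /limf_esup_lt_near vl; apply/lee_addgt0Pr => e e0.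
apply: limf_esup_le_near; near=> n.
have vnl : v n < l by near: n; apply: filterS vl => n; rewrite lte_fin.
have n0 : 0 < n%:R :> R by rewrite ltr0n; near: n; exact: nbhs_infty_gt.
have cne : c / n%:R <= e.
  rewrite ler_pdivrMr // [e * _]mulrC -ler_pdivrMr //.
  by near: n; exact: nbhs_infty_ger.
by rewrite -EFinD lee_fin; have := uv n; lra.
Unshelve. all: by end_near. Qed.

Lemma lee0_natSinv {R : realType} (x : \bar R) :
  (forall m, x <= (m.+1%:R^-1)%:E)%E -> (x <= 0)%E.
Proof.
move=> xm; apply/lee_addgt0Pr => e /ltr_add_invr[m]; rewrite add0r add0e => me.
by apply: le_trans (xm m) _; rewrite lee_fin ltW.
Qed.

Lemma finite_measure_nonincreasing_lt {d} {T : measurableType d} {R : realType}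
    (mu : {finite_measure set T -> \bar R}) (A : nat -> set T) :
  (forall n, measurable (A n)) -> nonincreasing_seq A ->
  mu.-negligible (\bigcap_n A n) ->
  forall delta : R, 0 < delta -> \forall n \near \oo, (mu (A n) < delta%:E)%E.
Proof.
move=> mA A_noninc [N [mN muN0 AN]] delta delta0.
have mcapA : measurable (\bigcap_n A n) := bigcapT_measurable mA.
have muA0 : mu (\bigcap_n A n) = 0%E by apply: (subset_measure0 mcapA mN).
have muA0_fin : (mu (A 0%N) < +oo)%E by rewrite ltey_eq fin_num_measure.
have muA_cvg0 : mu \o A @ \oo --> 0%E.
  by rewrite -muA0; exact: (nonincreasing_cvg_mu muA0_fin mA mcapA A_noninc).
apply: (muA_cvg0 [set x | x < delta%:E]%E).
by apply: open_ereal_lt'; rewrite lte_fin.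
Qed.

Lemma separable_dense_seq {R : realType} {T : pointedType} (rho : T -> T -> R) :
  separable_metric rho ->
  exists e : nat -> T, forall x r, 0 < r -> exists i, rho x (e i) < r.
Proof.
move=> [D [/pcard_surjP[e De] Ddense]]; exists e => x r r0.
by have [_ /De[i _ <-]] := Ddense x r r0; exists i.
Qed.

Lemma sum_first_visits_le (T : Type) (I : finType) (B : I -> set T)
    (x : nat -> T) (miss : nat -> bool) :
  (forall n i, (0 < n)%N -> miss n -> x n \in B i ->
    forall k, (k < n)%N -> x k \notin B i) ->
  forall N, (\sum_(1 <= n < N.+1) miss n
    <= #|I| + \sum_(1 <= n < N.+1) (x n \notin \bigcup_i B i))%N.
Proof.
move=> first N.
pose visited N : {set I} := [set i | [exists k : 'I_N.+1, x k \in B i]]%SET.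
suff : (\sum_(1 <= n < N.+1) miss n
    <= #|visited N| + \sum_(1 <= n < N.+1) (x n \notin \bigcup_i B i))%N.
  by move/leq_trans; apply; rewrite leq_add2r max_card.
elim: N => [|N IH]; first by rewrite !big_geq.
have sub : visited N \subset visited N.+1.
  apply/fintype.subsetP => i; rewrite !inE => /existsP[k xk].
  by apply/existsP; exists (widen_ord (leqnSn _) k).
suff step : (miss N.+1 + #|visited N|
    <= #|visited N.+1| + (x N.+1 \notin \bigcup_i B i))%N.
  by rewrite (big_nat_recr N.+1) // (big_nat_recr N.+1) //=; lia.
case: (boolP (x N.+1 \in \bigcup_i B i)) => [|_] /=; last first.
  by have := subset_leq_card sub; case: (miss _) => /=; lia.
rewrite in_setE => -[i _ /mem_set xi]; rewrite addn0.
case: (boolP (miss N.+1)) => [missN|_]; last exact: subset_leq_card.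
apply: proper_card; rewrite fintype.properE sub /=.
apply/fintype.subsetPn; exists i.
  by rewrite inE; apply/existsP; exists ord_max.
rewrite inE; apply/existsP => -[k xk].
by move: xk; apply/negP; apply: first missN xi _ _.
Qed.

Section nearest_neighbor_mistakes.
Set Implicit Arguments. Unset Strict Implicit.
Context {R : realType} {T : Type} {Y : eqType}.
Variables (rho : T -> T -> R) (eta : T -> Y).
Hypothesis rho_metric : is_metric rho.
Let rho_ge0 : forall x y, 0 <= rho x y := rho_metric.1.
Let rho_sym : forall x y, rho x y = rho y x := rho_metric.2.2.1.
Let rho_tri : forall x y z, rho x z <= rho x y + rho y z := rho_metric.2.2.2.

Definition rho_ball (c : T) (r : R) : set T := [set y | rho c y < r].

Definition safe_ball (c : T) (r : R) : Prop :=
  forall y, rho c y < 3 * r -> eta y = eta c.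

Lemma safe_ball_nn_label c r a b z :
  safe_ball c r -> rho_ball c r a -> rho_ball c r z ->
  rho a b <= rho a z -> eta b = eta a.
Proof.
move=> safe ca cz ab; rewrite /rho_ball /= in ca cz.
have r0 : 0 < r by apply: le_lt_trans ca.
have := rho_tri c a b; have := rho_tri a c z; have := rho_sym a c.
by move=> *; rewrite (safe a) ?(safe b) //; lra.
Qed.

Lemma margin_eq0 x :
  (forall r, 0 < r -> exists2 x', eta x' <> eta x & rho x x' < r) ->
  margin rho eta x = 0%E.
Proof.
move=> near_other; apply/eqP; rewrite eq_le; apply/andP; split.
  apply/lee_addgt0Pr => r /near_other[x' x'x xx'r]; rewrite add0e.
  apply: (@le_trans _ _ (rho x x')%:E); last by rewrite lee_fin ltW.
  by apply: ereal_inf_lbound; exists x'.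
by apply: le_ereal_inf_tmp => _ [x' _ <-]; rewrite lee_fin.
Qed.

Variable e : nat -> T.

Definition safe_piece {K} (p : 'I_K * 'I_K) : set T :=
  if `[< safe_ball (e p.1) p.2.+1%:R^-1 >] then rho_ball (e p.1) p.2.+1%:R^-1
  else set0.

Definition safe_cover K : set T := \bigcup_(p : 'I_K * 'I_K) safe_piece p.

Lemma safe_cover_nondecreasing K L :
  (K <= L)%N -> safe_cover K `<=` safe_cover L.
Proof.
by move=> KL y [[i m] _ piece]; exists (widen_ord KL i, widen_ord KL m).
Qed.

Lemma uncovered_boundary x :
  (forall x r, 0 < r -> exists i, rho x (e i) < r) ->
  (forall K, ~ safe_cover K x) -> boundary rho eta x.
Proof.
move=> e_dense uncovered; apply: margin_eq0 => r r0; apply: contrapT => far.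
have same_label y : rho x y < r -> eta y = eta x.
  by move=> xy; apply: contrapT => neq; apply: far; exists y.
have [m mr] : exists m, m.+1%:R^-1 < r / 4.
  have /ltr_add_invr[m] : 0 < r / 4 by rewrite divr_gt0.
  by rewrite add0r; exists m.
have [i xi] : exists i, rho x (e i) < m.+1%:R^-1.
  by apply: e_dense; rewrite invr_gt0 ltr0n.
have iK : (i < (maxn i m).+1)%N by rewrite ltnS leq_maxl.
have mK : (m < (maxn i m).+1)%N by rewrite ltnS leq_maxr.
apply: (uncovered (maxn i m).+1); exists (Ordinal iK, Ordinal mK) => //.
rewrite /safe_piece /=; case: asboolP => [_|].
  by rewrite /rho_ball /= rho_sym.
(* B(e_i, 3s) lies in B(x, 4s), and 4s < r. *)
apply; move: m.+1%:R^-1 mr xi => s sr xs y sy.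
rewrite (same_label y) ?(same_label (e i)); [by []|lra|].
by have := rho_tri x (e i) y; lra.
Qed.

Lemma nn_mistakes_le (x xt : nat -> T) K :
  (forall n, (0 < n)%N -> forall k, (k < n)%N ->
    rho (x n) (xt n) <= rho (x n) (x k)) ->
  forall N, (\sum_(1 <= n < N.+1) (eta (x n) != eta (xt n))
    <= K * K + \sum_(1 <= n < N.+1) (x n \notin safe_cover K))%N.
Proof.
move=> nn N.
have -> : (K * K = #|{: 'I_K * 'I_K}|)%N by rewrite card_prod card_ord.
apply: sum_first_visits_le => n [i m] n0 miss.
rewrite /safe_piece /=; case: asboolP => [safe|_]; last by rewrite in_setE.
rewrite in_setE => xn k kn; apply/negP; rewrite in_setE => xk.
move/eqP: miss; apply.
by rewrite (safe_ball_nn_label safe xn xk (nn n n0 k kn)).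
Qed.

Definition mistake_rate (x xt : nat -> T) (N : nat) : R :=
  (\sum_(1 <= n < N.+1) (if eta (x n) == eta (xt n) then 0 else 1 : R)) / N%:R.

Lemma mistake_rate_le {Omega : Type} (X Xt : nat -> Omega -> T) :
  nn_process rho X Xt -> forall w K N,
  mistake_rate (X^~ w) (Xt^~ w) N
    <= (K * K)%:R / N%:R + freq X (~` safe_cover K) w N.
Proof.
move=> nn w K N; rewrite /mistake_rate /freq -mulrDl ler_wpM2r ?invr_ge0 //.
have -> : \sum_(1 <= n < N.+1)
    (if eta (X n w) == eta (Xt n w) then 0 else 1 : R)
  = (\sum_(1 <= n < N.+1) (eta (X n w) != eta (Xt n w)))%:R.
  by rewrite natr_sum; apply: eq_bigr => n _; case: eqP.
have -> : \sum_(1 <= n < N.+1) (\1_(~` safe_cover K) (X n w) : R)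
  = (\sum_(1 <= n < N.+1) (X n w \notin safe_cover K))%:R.
  by rewrite natr_sum; apply: eq_bigr => n _; rewrite indicE in_setC.
rewrite -natrD ler_nat; apply: nn_mistakes_le => n n0.
exact: (nn n w n0).2.
Qed.

End nearest_neighbor_mistakes.

Section safe_cover_measurability.
Set Implicit Arguments. Unset Strict Implicit.
Context {R : realType} {d : measure_display} {T : measurableType d}.
Context {Y : eqType}.
Variables (rho : T -> T -> R) (eta : T -> Y).
Hypothesis rho_tri : forall x y z, rho x z <= rho x y + rho y z.
Hypothesis measurable_rho : measurable = <<s rho_open rho >>.

Lemma rho_ball_measurable c r : measurable (rho_ball rho c r).
Proof.
rewrite measurable_rho; apply: sub_sigma_algebra => z cz.
exists (r - rho c z); first by rewrite subr_gt0.
by move=> y /= zy; have := rho_tri c z y; rewrite /rho_ball /= in cz *; lra.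
Qed.

Lemma safe_cover_measurable e K : measurable (safe_cover rho eta e K).
Proof.
apply: fin_bigcup_measurable; first exact: finite_finset.
move=> p _; rewrite /safe_piece; case: asboolP => _.
  exact: rho_ball_measurable.
exact: measurable0.
Qed.

End safe_cover_measurability.

Theorem theorem1 (R : realType) (d0 d d' : measure_display)
  (Omega : measurableType d0) (P : probability Omega R)
  (T : measurableType d) (rho : T -> T -> R)
  (nu : {finite_measure set T -> \bar R})
  (Y : measurableType d') (eta : T -> Y)
  (X : nat -> Omega -> T) :
  is_metric rho ->
  separable_metric rho ->
  (@measurable d T) = <<s rho_open rho >> ->
  (forall n, measurable_fun setT (X n)) ->
  ergodically_dominated P nu X ->
  measurable_fun setT eta ->
  nu.-negligible (boundary rho eta) ->
  forall Xt : nat -> Omega -> T,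
    (forall n, (0 < n)%N -> measurable_fun setT (Xt n)) ->
    nn_process rho X Xt ->
    {ae P, forall w,
      limn_esup (fun N => ((\sum_(1 <= n < N.+1)
          (if eta (X n w) == eta (Xt n w) then 0 else 1 : R)) / N%:R)%:E) = 0%E}.
Proof.
move=> rho_metric /separable_dense_seq[e e_dense]
  measurable_rho _ dominated _ boundary_negligible Xt _ nn.
have [_ [_ [_ rho_tri]]] := rho_metric.
pose W := safe_cover rho eta e.
have mW K : measurable (W K).
  exact: safe_cover_measurable eta rho_tri measurable_rho e K.
have W_noninc : nonincreasing_seq (fun K => ~` W K).
  move=> K L KL; apply/subsetPset => x xWL xWK; apply: xWL.
  exact: safe_cover_nondecreasing KL _ xWK.
have uncovered_negligible : nu.-negligible (\bigcap_K ~` W K).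
  apply: negligibleS boundary_negligible => x uncovered.
  by apply: (uncovered_boundary rho_metric e_dense) => K; apply: uncovered.
have rate_small m : {ae P, forall w,
    (limn_esup (fun N => (mistake_rate eta (X^~ w) (Xt^~ w) N : R)%:E)
      <= (m.+1%:R^-1)%:E)%E}.
  have m_pos : 0 < m.+1%:R^-1 :> R by rewrite invr_gt0 ltr0n.
  have [delta delta0 freq_small] := dominated _ m_pos.
  have [K _ nuK] := finite_measure_nonincreasing_lt nu _
    (fun K => measurableC (mW K)) W_noninc uncovered_negligible _ delta0.
  apply: filterS (freq_small _ (measurableC (mW K)) (nuK K (leqnn K))).
  move=> w; have rate_bound := mistake_rate_le eta rho_metric e nn w K.
  exact: limn_esup_le_vanishing rate_bound.
apply: filterS (ae_foralln rate_small) => w rate_le.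
apply/eqP; rewrite eq_le (lee0_natSinv _ rate_le) /=.
apply: limf_esup_ge0 => // N; rewrite lee_fin divr_ge0 // sumr_ge0 // => n _.
by case: ifP.
Qed.
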